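(* Let $p\in\mathbb{T}^{\mathcal{P}([n])}$ be a tropical Wick vector. Then every circuit of $p$ is tropically orthogonal to every cocircuit of $p$.
   Context: $\mathbb{T}=\mathbb{R}\cup\{\infty\}$; $\mathcal{P}([n])$ the set of subsets of $[n]$. A tropical Wick vector is $p\in\mathbb{T}^{\mathcal{P}([n])}$ such that for all $S,T\subseteq[n]$ the minimum $\min_{i\in S\Delta T}(p_{S\Delta\{i\}}+p_{T\Delta\{i\}})$ is attained at least twice or equals $\infty$. Let $\mathcal{J}=\{1,\dots,n,1^*,\dots,n^*\}$ with involution $i\leftrightarrow i^*$. For $S\subseteq[n]$ its extension is the set $\bar S=S\cup\{i^*: i\in[n]\setminus S\}\subseteq\mathcal{J}$, and $\bar p_{\bar S}:=p_S$. For $T\subseteq[n]$ define $c_T\in\mathbb{T}^{\mathcal{J}}$ by $(c_T)_i=\bar p_{\bar T\Delta\{i,i^*\}}$ if $i\in\bar T$ and $\infty$ otherwise, and $c^*_T\in\mathbb{T}^{\mathcal{J}}$ by $(c^*_T)_i=\bar p_{\bar T\Delta\{i,i^*\}}$ if $i\notin\bar T$ and $\infty$ otherwise. A circuit of $p$ is a vector $c_T+\lambda\mathbf{1}$ ($T\subseteq[n]$, $\lambda\in\mathbb{R}$) with nonempty support (support = set of coordinates $\neq\infty$); a cocircuit of $p$ is a vector $c^*_T+\lambda\mathbf{1}$ with nonempty support. Two vectors $x,y\in\mathbb{T}^N$ are tropically orthogonal if $\min_k(x_k+y_k)$ is attained at least twice or equals $\infty$. *)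

(* Tropical numbers T = R ∪ {∞} over a real field R,
   encoded as option R with None = ∞. *)
From HB Require Import structures.
From mathcomp Require Import all_boot all_order all_algebra.
Set Implicit Arguments. Unset Strict Implicit. Unset Printing Implicit Defensive.
Import Order.TTheory GRing.Theory Num.Theory.
Local Open Scope ring_scope.

Section Trop.
Variable R : realFieldType.

Definition trop := option R.

(* tropical multiplication = ordinary sum, ∞ absorbing *)
Definition tadd (a b : trop) : trop :=
  match a, b with Some x, Some y => Some (x + y) | _, _ => None end.

Definition tle (a b : trop) : bool :=
  match a, b with
  | _, None => true
  | None, Some _ => false
  | Some x, Some y => x <= y
  end.

Definition min_twice_or_inf (I : finType) (A : {set I}) (f : I -> trop) : Prop :=
  (forall i, i \in A -> f i = None) \/
  exists i j, [/\ i \in A, j \in A, i != j, f i = f j &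
                  forall k, k \in A -> tle (f i) (f k)].

Definition symdiff (I : finType) (A B : {set I}) : {set I} := (A :\: B) :|: (B :\: A).

Variable n : nat.

Definition tvec := {set 'I_n} -> trop.

Definition tropical_Wick (p : tvec) : Prop :=
  forall S T : {set 'I_n},
    min_twice_or_inf (symdiff S T) (fun i => tadd (p (symdiff S [set i])) (p (symdiff T [set i]))).

(* J = {1..n, 1*..n*}: inl i is i, inr i is i* *)
Definition J := ('I_n + 'I_n)%type.

Definition star (j : J) : J :=
  match j with inl i => inr i | inr i => inl i end.

Definition ext (S : {set 'I_n}) : {set J} :=
  [set inl i | i in S] :|: [set inr i | i in ~: S].

(* \bar p, defined on extensions (∞ elsewhere; never used there) *)
Definition pbar (p : tvec) (X : {set J}) : trop :=
  match [pick U | ext U == X] with Some U => p U | None => None end.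

Definition circ_vec (p : tvec) (T : {set 'I_n}) (j : J) : trop :=
  if j \in ext T then pbar p (symdiff (ext T) [set j; star j]) else None.

Definition cocirc_vec (p : tvec) (T : {set 'I_n}) (j : J) : trop :=
  if j \notin ext T then pbar p (symdiff (ext T) [set j; star j]) else None.

Definition support (x : J -> trop) : {set J} := [set j | x j != None].

Definition is_circuit (p : tvec) (x : J -> trop) : Prop :=
  (exists (T : {set 'I_n}) (lam : R), forall j, x j = tadd (circ_vec p T j) (Some lam))
  /\ support x != set0.

Definition is_cocircuit (p : tvec) (x : J -> trop) : Prop :=
  (exists (T : {set 'I_n}) (lam : R), forall j, x j = tadd (cocirc_vec p T j) (Some lam))
  /\ support x != set0.

Definition trop_orthogonal (x y : J -> trop) : Prop :=
  min_twice_or_inf [set: J] (fun k => tadd (x k) (y k)).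

End Trop.

(* The coordinatewise tropical product of the circuit at T and the cocircuit at
   U is finite only on ext T :\: ext U, which the map i |-> (i or i*, whichever
   lies in ext T) identifies with the symmetric difference of T and U.  There
   the product is p(T Δ i) + p(U Δ i) up to a constant shift, so the Wick
   condition for the pair (T, U) is literally the orthogonality condition. *)
From mathcomp Require Import all_boot all_order all_algebra.
Set Implicit Arguments. Unset Strict Implicit. Unset Printing Implicit Defensive.
Import Order.TTheory GRing.Theory Num.Theory.
Local Open Scope ring_scope.

Lemma in_symdiff (I : finType) (A B : {set I}) (x : I) :
  (x \in symdiff A B) = ((x \in A) != (x \in B)).
Proof. by rewrite !inE; case: (x \in A); case: (x \in B). Qed.

Section TropicalArithmetic.
Variable R : realFieldType.

Lemma tadd_None_r (a : trop R) : tadd a None = None.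
Proof. by case: a. Qed.

Lemma taddACA_Some (a b : trop R) (l m : R) :
  tadd (tadd a (Some l)) (tadd b (Some m)) = tadd (tadd a b) (Some (l + m)).
Proof. by case: a; case: b => //= x y; rewrite addrACA. Qed.

Lemma tle_tadd2r (a b : trop R) (c : R) :
  tle a b -> tle (tadd a (Some c)) (tadd b (Some c)).
Proof. by case: a; case: b => //= x y; rewrite lerD2r. Qed.

Lemma min_twice_or_inf_transfer (I K : finType) (A : {set I}) (B : {set K})
    (e : I -> K) (f : I -> trop R) (g : K -> trop R) (c : R) :
  injective e -> e @: A \subset B ->
  (forall k, k \in B -> k \notin e @: A -> g k = None) ->
  (forall i, i \in A -> g (e i) = tadd (f i) (Some c)) ->
  min_twice_or_inf A f -> min_twice_or_inf B g.
Proof.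
move=> inj_e sub_eAB g_out g_e [f_inf | [i [j [Ai Aj neq_ij eq_fij min_fi]]]].
  left=> k Bk; have [/imsetP [i Ai ->] | /(g_out k Bk) //] := boolP (k \in e @: A).
  by rewrite g_e // f_inf.
right; exists (e i), (e j); split.
- by rewrite (subsetP sub_eAB) ?imset_f.
- by rewrite (subsetP sub_eAB) ?imset_f.
- by rewrite (inj_eq inj_e).
- by rewrite !g_e // eq_fij.
move=> k Bk; have [/imsetP [i' Ai' ->] | /(g_out k Bk) ->] := boolP (k \in e @: A).
  by rewrite !g_e //; apply: tle_tadd2r; apply: min_fi.
by case: (g (e i)).
Qed.

End TropicalArithmetic.

Section Extensions.
Variable n : nat.
Implicit Types (T U : {set 'I_n}) (i : 'I_n) (j k : J n).

Definition idx j : 'I_n := match j with inl i | inr i => i end.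

Definition is_inl j : bool := if j is inl _ then true else false.

Definition ext_elt T i : J n := if i \in T then inl i else inr i.

Lemma idx_ext_elt T i : idx (ext_elt T i) = i.
Proof. by rewrite /ext_elt; case: ifP. Qed.

Lemma ext_elt_inj T : injective (ext_elt T).
Proof. exact: can_inj (idx_ext_elt T). Qed.

Lemma in_ext T j : (j \in ext T) = ((idx j \in T) == is_inl j).
Proof.
rewrite /ext in_setU; case: j => i /=.
  rewrite eqb_id mem_imset; last exact: inl_inj.
  by case: (i \in T) => //=; apply/imsetP => -[].
rewrite eqbF_neg -in_setC mem_imset; last exact: inr_inj.
by rewrite orbC; case: (i \in ~: T) => //=; apply/imsetP => -[].
Qed.

Lemma in_ext_elt T U i : (ext_elt T i \in ext U) = ((i \in U) == (i \in T)).
Proof. by rewrite in_ext idx_ext_elt /ext_elt; case: (i \in T). Qed.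

Lemma in_ext_eq T j : (j \in ext T) = (j == ext_elt T (idx j)).
Proof.
by rewrite in_ext /ext_elt; case: j => i /=; case: (i \in T); rewrite ?eqxx.
Qed.

Lemma ext_inj : injective (@ext n).
Proof.
move=> U V eq_UV; apply/setP => i.
by have := in_ext U (inl i); rewrite eq_UV in_ext /= !eqb_id.
Qed.

Lemma symdiff_ext T j :
  symdiff (ext T) [set j; star j] = ext (symdiff T [set idx j]).
Proof.
apply/setP => k; rewrite !in_symdiff !in_ext /=.
have -> : (k \in [set j; star j]) = (idx k == idx j).
  by rewrite !inE; case: j; case: k => a b /=; rewrite ?orbF ?orFb.
rewrite in_symdiff in_set1.
by case: (idx k \in T); case: (is_inl k); case: (idx k == idx j).
Qed.

Lemma setD_ext T U : ext T :\: ext U = ext_elt T @: symdiff T U.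
Proof.
apply/setP => k; rewrite in_setD [k \in ext T]in_ext_eq.
apply/andP/imsetP => [[notU /eqP kE] | [i TUi ->]].
  exists (idx k); last exact: kE.
  by move: notU; rewrite kE in_ext_elt idx_ext_elt in_symdiff eq_sym.
by rewrite in_ext_elt idx_ext_elt eqxx eq_sym -in_symdiff.
Qed.

Variable R : realFieldType.
Variable p : tvec R n.

Lemma pbar_ext T : pbar p (ext T) = p T.
Proof.
rewrite /pbar; case: pickP => [U /eqP /ext_inj -> // | no_U].
by have := no_U T; rewrite eqxx.
Qed.

Lemma tadd_circ_cocirc T U k :
  tadd (circ_vec p T k) (cocirc_vec p U k) =
  if k \in ext T :\: ext U
  then tadd (p (symdiff T [set idx k])) (p (symdiff U [set idx k]))
  else None.
Proof.
rewrite /circ_vec /cocirc_vec !symdiff_ext !pbar_ext in_setD.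
by case: (k \in ext T); case: (k \in ext U); rewrite ?tadd_None_r.
Qed.

End Extensions.

Theorem proposition6p4 (R : realFieldType) (n : nat) (p : tvec R n) :
  tropical_Wick p ->
  forall x y : J n -> trop R,
    is_circuit p x -> is_cocircuit p y -> trop_orthogonal x y.
Proof.
move=> wick x y [[T [l xE]] _] [[U [m yE]] _].
have xyE k : tadd (x k) (y k) =
    tadd (tadd (circ_vec p T k) (cocirc_vec p U k)) (Some (l + m)).
  by rewrite xE yE taddACA_Some.
apply: (min_twice_or_inf_transfer (c := l + m) (ext_elt_inj (T := T)) (subsetT _)
         _ _ (wick T U)).
  by move=> k _; rewrite -setD_ext xyE tadd_circ_cocirc => /negbTE ->.
by move=> i TUi; rewrite xyE tadd_circ_cocirc setD_ext imset_f // idx_ext_elt.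
Qed.
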